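(* Let $T=(\{T_g\}_{g\in G},\{\gamma_{g,h}\}_{g,h\in G},u)$ be an action of a group $G$ on a semigroupal category $\mathcal{C}$, let $\mathcal{I}$ be an ideal of $\mathcal{C}$, and for each $g\in G$ put $\mathcal{C}_g=\mathcal{I}\cap\overline{T_g(\mathcal{I})}$. Then $\overline{T_g(\mathcal{C}_{g^{-1}})}=\mathcal{C}_g$ for all $g\in G$.
   Context: A semigroupal category is a (strict) category with a tensor product functor and associator satisfying the pentagon axiom. An action of a group $G$ (unit $e$) on $\mathcal{C}$ consists of semigroupal auto-equivalences $T_g$ of $\mathcal{C}$, natural isomorphisms of semigroupal functors $\gamma_{g,h}\colon T_gT_h\Rightarrow T_{gh}$ and $u\colon\mathrm{Id}_{\mathcal{C}}\Rightarrow T_e$, with $(\gamma_{gh,k})_X\circ(\gamma_{g,h})_{T_k(X)}=(\gamma_{g,hk})_X\circ T_g((\gamma_{h,k})_X)$, and with $u_{T_g(X)}$, $(\gamma_{e,g})_X$ mutually inverse and $T_g(u_X)$, $(\gamma_{g,e})_X$ mutually inverse. For a subcategory $\mathcal{D}$, $\overline{\mathcal{D}}$ denotes the smallest subcategory of $\mathcal{C}$ containing $\mathcal{D}$ and closed under isomorphisms. An ideal of $\mathcal{C}$ is a subcategory closed under isomorphisms such that $X\otimes Y$ and $Y\otimes X$ are objects of it whenever $X$ is an object of it and $Y$ is any object of $\mathcal{C}$. *)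

Set Implicit Arguments.
Unset Strict Implicit.

Record Grp := {
  gcar :> Type;
  gmul : gcar -> gcar -> gcar;
  gone : gcar;
  ginv : gcar -> gcar;
  gmulA : forall x y z, gmul x (gmul y z) = gmul (gmul x y) z;
  gmul1g : forall x, gmul gone x = x;
  gmulg1 : forall x, gmul x gone = x;
  gmulVg : forall x, gmul (ginv x) x = gone;
  gmulgV : forall x, gmul x (ginv x) = gone }.
Arguments gmul {g}.
Arguments gone {g}.
Arguments ginv {g}.

Record Category := {
  Ob :> Type;
  Hom : Ob -> Ob -> Type;
  idm : forall X, Hom X X;
  comp : forall X Y Z, Hom Y Z -> Hom X Y -> Hom X Z;
  comp_idl : forall X Y (f : Hom X Y), comp (idm Y) f = f;
  comp_idr : forall X Y (f : Hom X Y), comp f (idm X) = f;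
  comp_assoc : forall X Y Z W (h : Hom Z W) (g : Hom Y Z) (f : Hom X Y),
      comp h (comp g f) = comp (comp h g) f }.
Arguments Hom {c}.
Arguments idm {c}.
Arguments comp {c X Y Z}.

Definition mutually_inverse (C : Category) (X Y : C) (f : Hom X Y) (g : Hom Y X) :=
  comp g f = idm X /\ comp f g = idm Y.

Definition is_iso (C : Category) (X Y : C) (f : Hom X Y) :=
  exists g : Hom Y X, mutually_inverse f g.

Record SemigroupalCat := {
  cat :> Category;
  tens : cat -> cat -> cat;
  tensm : forall X X' Y Y', Hom X X' -> Hom Y Y' -> Hom (tens X Y) (tens X' Y');
  tensm_id : forall X Y, tensm (idm X) (idm Y) = idm (tens X Y);
  tensm_comp : forall X X' X'' Y Y' Y'' (f : Hom X' X'') (f' : Hom X X')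
      (g : Hom Y' Y'') (g' : Hom Y Y'),
      tensm (comp f f') (comp g g') = comp (tensm f g) (tensm f' g');
  assoc : forall X Y Z, Hom (tens (tens X Y) Z) (tens X (tens Y Z));
  assoc_iso : forall X Y Z, is_iso (assoc X Y Z);
  assoc_nat : forall X X' Y Y' Z Z' (f : Hom X X') (g : Hom Y Y') (h : Hom Z Z'),
      comp (assoc X' Y' Z') (tensm (tensm f g) h)
      = comp (tensm f (tensm g h)) (assoc X Y Z);
  pentagon : forall X Y Z W,
      comp (assoc X Y (tens Z W)) (assoc (tens X Y) Z W)
      = comp (tensm (idm X) (assoc Y Z W))
          (comp (assoc X (tens Y Z) W) (tensm (assoc X Y Z) (idm W))) }.
Arguments tens {s}.
Arguments tensm {s X X' Y Y'}.
Arguments assoc {s}.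

Record Functor (C : Category) := {
  fob : C -> C;
  fmor : forall X Y, Hom X Y -> Hom (fob X) (fob Y);
  fmor_id : forall X, fmor (idm X) = idm (fob X);
  fmor_comp : forall X Y Z (g : Hom Y Z) (f : Hom X Y),
      fmor (comp g f) = comp (fmor g) (fmor f) }.
Arguments fob {C}.
Arguments fmor {C f X Y} : rename.

Definition natural (C : Category) (F G : C -> C)
    (Fm : forall X Y, Hom X Y -> Hom (F X) (F Y))
    (Gm : forall X Y, Hom X Y -> Hom (G X) (G Y))
    (a : forall X, Hom (F X) (G X)) :=
  forall X Y (f : Hom X Y), comp (a Y) (Fm X Y f) = comp (Gm X Y f) (a X).

Definition natural_iso (C : Category) (F G : C -> C)
    (Fm : forall X Y, Hom X Y -> Hom (F X) (F Y))
    (Gm : forall X Y, Hom X Y -> Hom (G X) (G Y))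
    (a : forall X, Hom (F X) (G X)) :=
  natural Fm Gm a /\ forall X, is_iso (a X).

Definition is_equivalence (C : Category) (F : Functor C) :=
  exists H : Functor C,
    (exists eta : forall X, Hom X (fob H (fob F X)),
        natural_iso (fun X Y f => f) (fun X Y f => fmor (fmor f)) eta) /\
    (exists eps : forall X, Hom (fob F (fob H X)) X,
        natural_iso (fun X Y f => fmor (fmor f)) (fun X Y f => f) eps).

Record SFunctor (C : SemigroupalCat) := {
  sfun :> Functor C;
  sJ : forall X Y, Hom (tens (fob sfun X) (fob sfun Y)) (fob sfun (tens X Y));
  sJ_iso : forall X Y, is_iso (sJ X Y);
  sJ_nat : forall X X' Y Y' (f : Hom X X') (g : Hom Y Y'),
      comp (sJ X' Y') (tensm (fmor f) (fmor g)) = comp (fmor (tensm f g)) (sJ X Y);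
  sJ_assoc : forall X Y Z,
      comp (fmor (assoc X Y Z))
        (comp (sJ (tens X Y) Z) (tensm (sJ X Y) (idm (fob sfun Z))))
      = comp (sJ X (tens Y Z))
          (comp (tensm (idm (fob sfun X)) (sJ Y Z))
                (assoc (fob sfun X) (fob sfun Y) (fob sfun Z))) }.
Arguments sJ {C s}.

(* a : F o G => H is a natural isomorphism of semigroupal functors, where
   F o G carries the composite structure  F(J^G_{X,Y}) o J^F_{GX,GY}. *)
Definition snat_iso_comp (C : SemigroupalCat) (F G H : SFunctor C)
    (a : forall X, Hom (fob F (fob G X)) (fob H X)) :=
  natural_iso (fun X Y f => fmor (fmor f)) (fun X Y f => fmor f) a /\
  forall X Y,
    comp (a (tens X Y)) (comp (fmor (sJ X Y)) (sJ (fob G X) (fob G Y)))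
    = comp (sJ X Y) (tensm (a X) (a Y)).

Arguments snat_iso_comp {C} F G H a.

(* u : Id => F is a natural isomorphism of semigroupal functors, where Id
   carries the identity structure J = id. *)
Definition snat_iso_id (C : SemigroupalCat) (F : SFunctor C)
    (u : forall X, Hom X (fob F X)) :=
  natural_iso (fun X Y f => f) (fun X Y f => fmor f) u /\
  forall X Y, comp (u (tens X Y)) (idm (tens X Y)) = comp (sJ X Y) (tensm (u X) (u Y)).

Arguments snat_iso_id {C} F u.

Definition castH (G : Grp) (C : Category) (A : C) (P : G -> C) (a b : G)
    (e : a = b) (f : Hom A (P a)) : Hom A (P b) :=
  match e in _ = c return Hom A (P c) with eq_refl => f end.

Record GroupAction (G : Grp) (C : SemigroupalCat) := {
  T : G -> SFunctor C;
  T_equiv : forall g, is_equivalence (T g);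
  gam : forall g h X, Hom (fob (T g) (fob (T h) X)) (fob (T (gmul g h)) X);
  gam_iso : forall g h, snat_iso_comp (T g) (T h) (T (gmul g h)) (gam g h);
  u : forall X, Hom X (fob (T gone) X);
  u_iso : snat_iso_id (T gone) u;
  gam_coh : forall g h k X,
      comp (gam (gmul g h) k X) (gam g h (fob (T k) X))
      = castH (P := fun c => fob (T c) X) (gmulA g h k)
          (comp (gam g (gmul h k) X) (fmor (gam h k X)));
  unit_l : forall g X,
      mutually_inverse (u (fob (T g) X))
        (castH (P := fun c => fob (T c) X) (gmul1g g) (gam gone g X));
  unit_r : forall g X,
      mutually_inverse (fmor (u X))
        (castH (P := fun c => fob (T c) X) (gmulg1 g) (gam g gone X)) }.
Arguments T {G C}.

Record SubColl (C : Category) := {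
  sob : C -> Prop;
  smor : forall X Y : C, Hom X Y -> Prop }.
Arguments sob {C}.
Arguments smor {C} s {X Y}.

Definition is_subcat (C : Category) (D : SubColl C) :=
  (forall X Y (f : Hom X Y), smor D f -> sob D X /\ sob D Y) /\
  (forall X, sob D X -> smor D (idm X)) /\
  (forall X Y Z (g : Hom Y Z) (f : Hom X Y), smor D g -> smor D f -> smor D (comp g f)).

Definition iso_closed (C : Category) (D : SubColl C) :=
  forall X Y (f : Hom X Y), sob D X -> is_iso f -> sob D Y /\ smor D f.

Definition contained (C : Category) (D E : SubColl C) :=
  (forall X, sob D X -> sob E X) /\
  (forall X Y (f : Hom X Y), smor D f -> smor E f).

Definition same_subcat (C : Category) (D E : SubColl C) :=
  contained D E /\ contained E D.

(* \overline{D}: smallest subcategory containing D closed under isomorphisms *)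
Definition closure (C : Category) (D : SubColl C) : SubColl C := {|
  sob := fun X => forall S : SubColl C,
           is_subcat S -> iso_closed S -> contained D S -> sob S X;
  smor := fun X Y f => forall S : SubColl C,
           is_subcat S -> iso_closed S -> contained D S -> smor S f |}.

Definition inter (C : Category) (D E : SubColl C) : SubColl C := {|
  sob := fun X => sob D X /\ sob E X;
  smor := fun X Y f => smor D f /\ smor E f |}.

Inductive img_mor (C : Category) (F : Functor C) (D : SubColl C)
    : forall A B : C, Hom A B -> Prop :=
  | img_mor_in : forall X Y (f : Hom X Y), smor D f -> img_mor F D (@fmor C F X Y f).

Definition image (C : Category) (F : Functor C) (D : SubColl C) : SubColl C := {|
  sob := fun A => exists X, sob D X /\ A = fob F X;
  smor := fun A B h => img_mor F D h |}.

Definition is_ideal (C : SemigroupalCat) (I : SubColl C) :=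
  is_subcat I /\ iso_closed I /\
  forall X Y : C, sob I X -> sob I (tens X Y) /\ sob I (tens Y X).

Definition Cg (G : Grp) (C : SemigroupalCat) (A : GroupAction G C)
    (I : SubColl C) (g : G) : SubColl C :=
  inter I (closure (image (T A g) I)).

(* Since T_g T_{g^-1} ≅ T_e ≅ Id, a subcategory closed under isomorphisms
   contains X (resp. f) iff it contains T_g T_{g^-1} X (resp. T_g T_{g^-1} f).
   Hence the preimage of I under T_g is an isomorphism-closed subcategory
   containing T_{g^-1}(I), so it contains \overline{T_{g^-1}(I)}; this gives
   T_g(C_{g^-1}) ⊆ C_g for every g.  Applied to g^-1 and pushed forward by T_g
   it gives T_g T_{g^-1}(C_g) ⊆ T_g(C_{g^-1}), whence the reverse inclusion. *)
From Stdlib Require Import Setoid.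

Set Implicit Arguments.
Unset Strict Implicit.

Lemma is_iso_inverse (C : Category) (X Y : C) (f : Hom X Y) (g : Hom Y X) :
  mutually_inverse f g -> is_iso g.
Proof. intros [Hgf Hfg]. exists f. split; assumption. Qed.

Lemma fmor_iso (C : Category) (F : Functor C) (X Y : C) (f : Hom X Y) :
  is_iso f -> is_iso (fmor (f:=F) f).
Proof.
  intros [g [Hgf Hfg]]. exists (fmor (f:=F) g). split.
  - rewrite <- fmor_comp, Hgf. apply fmor_id.
  - rewrite <- fmor_comp, Hfg. apply fmor_id.
Qed.

Section IsoClosedSubcategory.

Variables (C : Category) (S : SubColl C).
Hypotheses (HS : is_subcat S) (HSi : iso_closed S).

Lemma sob_iso_l (X Y : C) (f : Hom X Y) : is_iso f -> sob S Y -> sob S X.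
Proof.
  intros [g Hfg] HY. exact (proj1 (HSi HY (is_iso_inverse Hfg))).
Qed.

Lemma smor_iso_conj (X Y X' Y' : C) (p : Hom Y Y') (h : Hom X Y) (q : Hom X' X) :
  is_iso p -> is_iso q -> smor S h -> smor S (comp p (comp h q)).
Proof.
  intros Hp Hq Hh.
  destruct HS as [Hends [_ Hcomp]].
  destruct (Hends _ _ _ Hh) as [HX HY].
  apply Hcomp; [exact (proj2 (HSi HY Hp)) | apply Hcomp; [exact Hh |]].
  exact (proj2 (HSi (sob_iso_l Hq HX) Hq)).
Qed.

Lemma natural_iso_sob (F G : C -> C) Fm Gm (a : forall X, Hom (F X) (G X)) X :
  natural_iso Fm Gm a -> sob S (F X) <-> sob S (G X).
Proof.
  intros [_ Hiso]. split; intro HX.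
  - exact (proj1 (HSi HX (Hiso X))).
  - exact (sob_iso_l (Hiso X) HX).
Qed.

Lemma natural_iso_smor (F G : C -> C) Fm Gm (a : forall X, Hom (F X) (G X))
    (X Y : C) (h : Hom X Y) :
  natural_iso Fm Gm a -> smor S (Fm X Y h) <-> smor S (Gm X Y h).
Proof.
  intros [Hnat Hiso].
  destruct (Hiso X) as [bX [HbaX HabX]], (Hiso Y) as [bY [HbaY HabY]].
  split; intro Hh.
  - assert (E : Gm X Y h = comp (a Y) (comp (Fm X Y h) bX)).
    { rewrite comp_assoc, Hnat, <- comp_assoc, HabX, comp_idr. reflexivity. }
    rewrite E. apply smor_iso_conj; [apply Hiso | exists (a X); split |]; assumption.
  - assert (E : Fm X Y h = comp bY (comp (Gm X Y h) (a X))).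
    { rewrite <- Hnat, comp_assoc, HbaY, comp_idl. reflexivity. }
    rewrite E. apply smor_iso_conj; [exists (a Y); split | apply Hiso |]; assumption.
Qed.

End IsoClosedSubcategory.

Section SubcategoryConstructions.

Variable C : Category.
Implicit Types D E S : SubColl C.

Lemma contained_trans D E S : contained D E -> contained E S -> contained D S.
Proof. intros [DEo DEm] [ESo ESm]. split; auto. Qed.

Lemma closure_incl D : contained D (closure D).
Proof.
  split; simpl.
  - intros X HX S _ _ [HDSo _]. auto.
  - intros X Y f Hf S _ _ [_ HDSm]. auto.
Qed.

Lemma closure_min D S :
  is_subcat S -> iso_closed S -> contained D S -> contained (closure D) S.
Proof.
  intros HS HSi HDS. split; simpl.
  - intros X HX. exact (HX S HS HSi HDS).
  - intros X Y f Hf. exact (Hf S HS HSi HDS).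
Qed.

Lemma closure_subcat D : is_subcat (closure D).
Proof.
  split; [| split]; simpl.
  - intros X Y f Hf. split; intros S HS HSi HDS;
      destruct (proj1 HS X Y f (Hf S HS HSi HDS)); assumption.
  - intros X HX S HS HSi HDS. exact (proj1 (proj2 HS) X (HX S HS HSi HDS)).
  - intros X Y Z g f Hg Hf S HS HSi HDS. apply (proj2 (proj2 HS)); auto.
Qed.

Lemma closure_iso_closed D : iso_closed (closure D).
Proof.
  intros X Y f HX Hf. simpl. split; intros S HS HSi HDS;
    apply (HSi _ _ f (HX S HS HSi HDS) Hf).
Qed.

Lemma contained_inter D E S :
  contained D E -> contained D S -> contained D (inter E S).
Proof. intros [DEo DEm] [DSo DSm]. split; simpl; auto. Qed.

Lemma inter_contained_l D E : contained (inter D E) D.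
Proof. split; simpl; tauto. Qed.

Lemma inter_contained_r D E : contained (inter D E) E.
Proof. split; simpl; tauto. Qed.

Lemma inter_subcat D E : is_subcat D -> is_subcat E -> is_subcat (inter D E).
Proof.
  intros [Dends [Did Dcomp]] [Eends [Eid Ecomp]]. split; [| split]; simpl.
  - intros X Y f [HfD HfE].
    destruct (Dends _ _ _ HfD), (Eends _ _ _ HfE). tauto.
  - intros X [HXD HXE]. auto.
  - intros X Y Z g f [HgD HgE] [HfD HfE]. auto.
Qed.

Lemma inter_iso_closed D E : iso_closed D -> iso_closed E -> iso_closed (inter D E).
Proof.
  intros HDi HEi X Y f [HXD HXE] Hf. simpl.
  destruct (HDi _ _ _ HXD Hf), (HEi _ _ _ HXE Hf). tauto.
Qed.

Lemma image_mono (F : Functor C) D E : contained D E -> contained (image F D) (image F E).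
Proof.
  intros [DEo DEm]. split; simpl.
  - intros Z [X [HX ->]]. eauto.
  - intros Z W h [X Y f Hf]. constructor. auto.
Qed.

End SubcategoryConstructions.

Definition preimage (C : Category) (F : Functor C) (S : SubColl C) : SubColl C := {|
  sob := fun X => sob S (fob F X);
  smor := fun X Y f => smor S (fmor (f:=F) f) |}.

Section Preimage.

Variables (C : Category) (F : Functor C) (S : SubColl C).

Lemma image_preimage : contained (image F (preimage F S)) S.
Proof.
  split; simpl.
  - intros Z [X [HX ->]]. exact HX.
  - intros Z W h [X Y f Hf]. exact Hf.
Qed.

Lemma preimage_subcat : is_subcat S -> is_subcat (preimage F S).
Proof.
  intros [Sends [Sid Scomp]]. split; [| split]; simpl.
  - intros X Y f Hf. exact (Sends _ _ _ Hf).
  - intros X HX. rewrite fmor_id. auto.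
  - intros X Y Z g f Hg Hf. rewrite fmor_comp. auto.
Qed.

Lemma preimage_iso_closed : iso_closed S -> iso_closed (preimage F S).
Proof.
  intros HSi X Y f HX Hf. exact (HSi _ _ _ HX (fmor_iso F Hf)).
Qed.

End Preimage.

Section InverseActions.

Variables (G : Grp) (C : SemigroupalCat) (A : GroupAction G C).
Variables (m k : G).
Hypothesis Hmk : gmul m k = gone.

Section InvariantSubcategory.

Variable S : SubColl C.
Hypotheses (HS : is_subcat S) (HSi : iso_closed S).

Lemma sob_T_inverse (X : C) : sob S X <-> sob S (fob (T A m) (fob (T A k) X)).
Proof.
  rewrite (natural_iso_sob HSi _ (proj1 (gam_iso A m k))), Hmk.
  exact (natural_iso_sob HSi _ (proj1 (u_iso A))).
Qed.

Lemma smor_T_inverse (X Y : C) (f : Hom X Y) :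
  smor S f <-> smor S (fmor (f:=T A m) (fmor (f:=T A k) f)).
Proof.
  rewrite (natural_iso_smor HS HSi _ (proj1 (gam_iso A m k))), Hmk.
  exact (natural_iso_smor HS HSi _ (proj1 (u_iso A))).
Qed.

Lemma image_sub_preimage : contained (image (T A k) S) (preimage (T A m) S).
Proof.
  split; simpl.
  - intros Z [X [HX ->]]. exact (proj1 (sob_T_inverse X) HX).
  - intros Z W h [X Y f Hf]. exact (proj1 (smor_T_inverse f) Hf).
Qed.

Lemma closure_image_sub_preimage :
  contained (closure (image (T A k) S)) (preimage (T A m) S).
Proof.
  apply closure_min; [apply preimage_subcat | apply preimage_iso_closed |
    apply image_sub_preimage]; assumption.
Qed.

Lemma contained_of_image_image (D : SubColl C) :
  contained (image (T A m) (image (T A k) D)) S -> contained D S.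
Proof.
  intros [Hob Hmor]. split.
  - intros X HX. apply (proj2 (sob_T_inverse X)), Hob. simpl. eauto.
  - intros X Y f Hf. apply (proj2 (smor_T_inverse f)), Hmor. simpl.
    do 2 constructor. exact Hf.
Qed.

End InvariantSubcategory.

End InverseActions.

Section Cg.

Variables (G : Grp) (C : SemigroupalCat) (A : GroupAction G C) (I : SubColl C).
Hypotheses (HI : is_subcat I) (HIi : iso_closed I).

Lemma Cg_subcat (g : G) : is_subcat (Cg A I g).
Proof. apply inter_subcat; [assumption | apply closure_subcat]. Qed.

Lemma Cg_iso_closed (g : G) : iso_closed (Cg A I g).
Proof. apply inter_iso_closed; [assumption | apply closure_iso_closed]. Qed.

Lemma image_Cg_sub_Cg (g h : G) :
  gmul g h = gone -> contained (image (T A g) (Cg A I h)) (Cg A I g).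
Proof.
  intro Hgh. apply contained_inter.
  - eapply contained_trans; [apply image_mono | apply image_preimage].
    eapply contained_trans; [apply inter_contained_r |].
    exact (closure_image_sub_preimage A Hgh HI HIi).
  - eapply contained_trans; [apply image_mono, inter_contained_l | apply closure_incl].
Qed.

End Cg.

Theorem corollary3p2 (G : Grp) (C : SemigroupalCat) (A : GroupAction G C)
    (I : SubColl C) (HI : is_ideal I) (g : G) :
  same_subcat (closure (image (T A g) (Cg A I (ginv g)))) (Cg A I g).
Proof.
  destruct HI as [HIsub [HIiso _]].
  split.
  - apply closure_min; [apply Cg_subcat | apply Cg_iso_closed |
      apply image_Cg_sub_Cg; [| | apply gmulgV]]; assumption.
  - apply (contained_of_image_image (A := A) (gmulgV g)).
    + apply closure_subcat.
    + apply closure_iso_closed.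
    + eapply contained_trans; [apply image_mono | apply closure_incl].
      apply image_Cg_sub_Cg; [| | apply gmulVg]; assumption.
Qed.
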